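(* Let $\rho$ be an $n$-qubit state positively represented under a frame function $F$, let $U$ be an $n$-qubit Clifford unitary with symplectic map $S$ and phase function $P$, and let $F'(\mathbf{a})=F(S^{-1}(\mathbf{a}))+P(S^{-1}(\mathbf{a}))$. Let $I\subseteq[n]$ be such that the map $q(\mathbf{a}_z)=F'(\mathbf{0}_x,\mathbf{a}_z)$, restricted to $Z_I=\{\mathbf{a}_z\in\mathbb{Z}_2^n: a_{iz}=0\ \forall i\notin I\}$, is a Boolean polynomial of degree at most $2$. Then there exist a linear subspace $V\subseteq Z_I$ with $\dim V\ge\lfloor(|I|+1)/2\rfloor$ and a vector $\mathbf{k}\in\mathbb{Z}_2^n$ with $q(\mathbf{a}_z)=\mathbf{k}\cdot\mathbf{a}_z$ for all $\mathbf{a}_z\in V$, such that for any basis $\mathbf{v}_1,\dots,\mathbf{v}_m$ of $V$ and any $\mathbf{c}\in\mathbb{Z}_2^m$, $$\Pr_{\mathbf{y}\sim p}\big[\mathbf{v}_j\cdot\mathbf{y}=c_j\ \forall j\big]=\sum_{\mathbf{u}:\ \mathbf{v}_j\cdot(S(\mathbf{u})_x+\mathbf{k})=c_j\ \forall j}W^F_\rho(\mathbf{u}).$$ In particular, at least $\lfloor(|I|+1)/2\rfloor$ linearly independent linear Boolean functions of the measurement outcomes on the qubits in $I$ can be jointly sampled exactly by drawing $\mathbf{u}\sim W^F_\rho$ and outputting $(\mathbf{v}_j\cdot(S(\mathbf{u})_x+\mathbf{k}))_{j=1}^m$.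
   Context: Let $n\ge 1$. Phase-space points are $\mathbf{u}=(\mathbf{u}_x,\mathbf{u}_z)=(u_{1x},\dots,u_{nx},u_{1z},\dots,u_{nz})\in\mathbb{Z}_2^{2n}$. For $\mathbf{a}\in\mathbb{Z}_2^{2n}$ let $T_{\mathbf{a}}=\bigotimes_{j=1}^n i^{a_{jx}a_{jz}}X^{a_{jx}}Z^{a_{jz}}$, where $X,Z$ are the single-qubit Pauli matrices. The symplectic product is $[\mathbf{u},\mathbf{a}]=\mathbf{u}_x\cdot\mathbf{a}_z+\mathbf{u}_z\cdot\mathbf{a}_x\pmod 2$. A frame function is any $F:\mathbb{Z}_2^{2n}\to\mathbb{Z}_2$ with $F(\mathbf{0})=0$. The phase point operator is $A^F(\mathbf{u})=2^{-n}\sum_{\mathbf{a}\in\mathbb{Z}_2^{2n}}(-1)^{[\mathbf{u},\mathbf{a}]+F(\mathbf{a})}T_{\mathbf{a}}$, and the framed Wigner function of an $n$-qubit density matrix $\rho$ is $W^F_\rho(\mathbf{u})=2^{-n}\mathrm{Tr}[\rho A^F(\mathbf{u})]$, so that $\rho=\sum_{\mathbf{u}}W^F_\rho(\mathbf{u})A^F(\mathbf{u})$. The state $\rho$ is positively represented under $F$ if $W^F_\rho(\mathbf{u})\ge 0$ for all $\mathbf{u}$. For an $n$-qubit Clifford unitary $U$ there are a linear bijection $S$ of $\mathbb{Z}_2^{2n}$ preserving $[\cdot,\cdot]$ and a function $P:\mathbb{Z}_2^{2n}\to\mathbb{Z}_2$ (the phase function) with $UT_{\mathbf{a}}U^\dagger=(-1)^{P(\mathbf{a})}T_{S(\mathbf{a})}$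 for all $\mathbf{a}$. $p(\mathbf{y})=\langle\mathbf{y}|U\rho U^\dagger|\mathbf{y}\rangle$ for $\mathbf{y}\in\mathbb{Z}_2^n$; $(\mathbf{0}_x,\mathbf{a}_z)$ is the point with $x$-part zero. *)

From HB Require Import structures.
From mathcomp Require Import all_boot all_order all_algebra.
Set Implicit Arguments. Unset Strict Implicit. Unset Printing Implicit Defensive.
Import Order.TTheory GRing.Theory Num.Theory.
Local Open Scope ring_scope.

Notation bits n := 'rV['F_2]_n.
Notation phase n := 'rV['F_2]_(n + n).
Definition xpart n (u : phase n) : bits n := lsubmx u.
Definition zpart n (u : phase n) : bits n := rsubmx u.
Definition zpoint n (az : bits n) : phase n := row_mx 0 az.

Definition dot n (v w : bits n) : 'F_2 := \sum_(i < n) v 0 i * w 0 i.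
Definition sympl n (u a : phase n) : 'F_2 :=
  dot (xpart u) (zpart a) + dot (zpart u) (xpart a).

Definition sgn (C : numClosedFieldType) (b : 'F_2) : C := (-1) ^+ (b : nat).

(* Hilbert space dimension 2^n: basis vectors |y> indexed by y : bits n,
   via enum_rank / enum_val. *)
Notation dimH n := #|{: bits n}|.
Notation op C n := 'M[C]_(dimH n).

Definition adj (C : numClosedFieldType) m p (A : 'M[C]_(m, p)) : 'M[C]_(p, m) :=
  (map_mx Num.conj A)^T.

Definition PX (C : numClosedFieldType) : 'M[C]_2 :=
  \matrix_(r, s) (r != s)%:R.
Definition PZ (C : numClosedFieldType) : 'M[C]_2 :=
  \matrix_(r, s) ((r == s)%:R * (-1) ^+ (r : nat)).
Definition pauli1 (C : numClosedFieldType) (a b : 'F_2) : 'M[C]_2 :=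
  'i ^+ ((a : nat) * (b : nat)) *: (PX C ^+ (a : nat) * PZ C ^+ (b : nat)).
Definition bit2ord (b : 'F_2) : 'I_2 := inord (b : nat).

(* T_a = tensor_j i^{a_jx a_jz} X^{a_jx} Z^{a_jz}, written entrywise:
   <x| T_a |y> = prod_j <x_j| i^{..} X^{a_jx} Z^{a_jz} |y_j>. *)
Definition T (C : numClosedFieldType) n (a : phase n) : op C n :=
  \matrix_(i, j)
    \prod_(k < n) pauli1 C (xpart a 0 k) (zpart a 0 k)
                         (bit2ord ((enum_val i : bits n) 0 k)) (bit2ord ((enum_val j : bits n) 0 k)).

Definition Aop (C : numClosedFieldType) n (F : phase n -> 'F_2) (u : phase n)
  : op C n :=
  ((2 : C) ^+ n)^-1 *: \sum_(a : phase n) sgn C (sympl u a + F a) *: T C a.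

Definition Wig (C : numClosedFieldType) n (F : phase n -> 'F_2)
  (rho : op C n) (u : phase n) : C :=
  ((2 : C) ^+ n)^-1 * \tr (rho *m Aop C F u).

Definition density (C : numClosedFieldType) m (rho : 'M[C]_m) : Prop :=
  [/\ adj rho = rho,
      forall v : 'cV[C]_m, 0 <= (adj v *m rho *m v) 0 0
    & \tr rho = 1].

Definition unitary (C : numClosedFieldType) m (U : 'M[C]_m) : Prop :=
  U *m adj U = 1%:M.

Definition in_ZI n (I : {set 'I_n}) (az : bits n) : Prop :=
  forall i, i \notin I -> az 0 i = 0.

Definition outp (C : numClosedFieldType) n (U rho : op C n) (y : bits n) : C :=
  (U *m rho *m adj U) (enum_rank y) (enum_rank y).

From HB Require Import structures.
From mathcomp Require Import all_boot all_order all_algebra.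
From mathcomp Require Import ring zify.
Import Order.TTheory GRing.Theory Num.Theory.
Local Open Scope ring_scope.
Set Implicit Arguments. Unset Strict Implicit. Unset Printing Implicit Defensive.

(* The proof is Fourier analysis over Z_2^n.  For w in Z_2^n the characteristic
   function of the outcome distribution, sum_y p(y) (-1)^{w.y}, is the trace of
   U rho U^dag against the diagonal Pauli T(0_x,w).  Clifford covariance moves
   this to a trace of rho against T(S^{-1}(0_x,w)), and inverting the Wigner
   transform turns it into (-1)^{q(w)} sum_u W(u) (-1)^{S(u)_x . w}
   ([outcome_char]).  On a subspace V where q agrees with w |-> k.w the two
   characteristic functions agree up to the shift by k, and the joint law of the
   parities v_j.y follows by expanding the indicator of {v_j.y = c_j} into
   characters ([marginal_from_chars]).  Such a V exists: q is quadratic on Z_I,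
   its polar form is an alternating bilinear form, q is additive on totally
   isotropic subspaces of that form, and Z_I (of dimension |I|) has a totally
   isotropic subspace of dimension floor((|I|+1)/2) ([isotropic_subspace]). *)

Lemma F2_cases (x : 'F_2) : x = 0 \/ x = 1.
Proof. by case: x => [[|[|m]] // lt_x2]; [left|right]; apply/val_inj. Qed.

Lemma F2_addxx (x : 'F_2) : x + x = 0.
Proof. exact: (addrr_pchar2 (pchar_Fp _)). Qed.

Lemma F2_add_eq0 (x y : 'F_2) : (x + y == 0) = (x == y).
Proof. by rewrite addr_eq0 (oppr_pchar2 (pchar_Fp _)). Qed.

Lemma F2_mx_add_eq0 m k (x y : 'M['F_2]_(m, k)) : (x + y == 0) = (x == y).
Proof.
rewrite addr_eq0; congr (_ == _).
by apply/matrixP => i j; rewrite mxE (oppr_pchar2 (pchar_Fp _)).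
Qed.

Section Sign.
Variable C : numClosedFieldType.

Lemma sgn0 : sgn C 0 = 1. Proof. by rewrite /sgn expr0. Qed.
Lemma sgn1 : sgn C 1 = -1. Proof. by rewrite /sgn expr1. Qed.

Lemma sgnD a b : sgn C (a + b) = sgn C a * sgn C b.
Proof.
case: (F2_cases a) => ->; case: (F2_cases b) => ->;
  rewrite ?add0r ?addr0 ?sgn0 ?mul1r ?mulr1 // F2_addxx sgn0 sgn1 mulrNN mulr1 //.
Qed.

Lemma sgn_sq a : sgn C a * sgn C a = 1.
Proof. by rewrite -sgnD F2_addxx sgn0. Qed.

Lemma sgn_sum (J : finType) (f : J -> 'F_2) :
  sgn C (\sum_i f i) = \prod_i sgn C (f i).
Proof. exact: (big_morph _ sgnD sgn0). Qed.

Lemma sgn1_neq1 : sgn C 1 != 1.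
Proof.
by rewrite sgn1 -subr_eq0 -opprD oppr_eq0 -mulr2n mulrn_eq0 /= oner_eq0.
Qed.
End Sign.

Section Dot.
Variable n : nat.
Implicit Types a b c : bits n.

Lemma dotC a b : dot a b = dot b a.
Proof. by apply: eq_bigr => i _; rewrite mulrC. Qed.

Lemma dotDl a b c : dot (a + b) c = dot a c + dot b c.
Proof. by rewrite /dot -big_split; apply: eq_bigr => i _; rewrite mxE mulrDl. Qed.

Lemma dotDr a b c : dot c (a + b) = dot c a + dot c b.
Proof. by rewrite !(dotC c) dotDl. Qed.

Lemma dotZl x a c : dot (x *: a) c = x * dot a c.
Proof. by rewrite /dot mulr_sumr; apply: eq_bigr => i _; rewrite mxE mulrA. Qed.

Lemma dot0l a : dot 0 a = 0.
Proof. by rewrite /dot big1 // => i _; rewrite mxE mul0r. Qed.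

Lemma dot0r a : dot a 0 = 0.
Proof. by rewrite dotC dot0l. Qed.

Lemma dot_suml (J : finType) (f : J -> bits n) c :
  dot (\sum_i f i) c = \sum_i dot (f i) c.
Proof. exact: (big_morph (fun a => dot a c) (fun a b => dotDl a b c) (dot0l c)). Qed.

Lemma dot_deltal i c : dot (delta_mx 0 i) c = c 0 i.
Proof.
rewrite /dot (bigD1 i) //= big1 ?addr0 => [|j /negbTE ji]; rewrite mxE ?eqxx ?mul1r //.
by rewrite ji mul0r.
Qed.
End Dot.

Lemma dot_row_mx n m (a c : bits n) (b d : bits m) :
  dot (row_mx a b) (row_mx c d) = dot a c + dot b d.
Proof.
by rewrite /dot big_split_ord; congr (_ + _); apply: eq_bigr => i _;
  rewrite ?row_mxEl ?row_mxEr.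
Qed.

Lemma char_sum (C : numClosedFieldType) N (z : bits N) :
  \sum_(t : bits N) sgn C (dot t z) = (z == 0)%:R * 2%:R ^+ N.
Proof.
have [->|nz] := eqVneq z 0.
  under eq_bigr do rewrite dot0r sgn0.
  by rewrite sumr_const card_mx card_Fp // mul1n mul1r natrX.
have [i zi] : exists i, z 0 i = 1.
  suff /existsP[i /eqP zi] : [exists i, z 0 i == 1] by exists i.
  apply: contraR nz => /existsPn z0; apply/eqP/rowP => i.
  by rewrite mxE; case: (F2_cases (z 0 i)) (z0 i) => ->; rewrite ?eqxx.
(* translating t by the i-th unit vector flips every term *)
set s := \sum_t _; have s_opp : s = - s.
  rewrite {1}/s (reindex_inj (addIr (delta_mx 0 i))) /= -sumrN.
  by apply: eq_bigr => t _; rewrite dotDl dot_deltal zi sgnD sgn1 mulrN1.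
rewrite mul0r; apply/eqP; move/eqP: s_opp.
by rewrite -subr_eq0 opprK -mulr2n mulrn_eq0.
Qed.

Lemma two_expn_neq0 (C : numClosedFieldType) k : (2 : C) ^+ k != 0.
Proof. by rewrite expf_neq0 // pnatr_eq0. Qed.

(* The symplectic product is the dot product with the x/z-swapped vector, so
   its characters are orthogonal as well. *)
Section Symplectic.
Variable n : nat.
Definition swap (c : phase n) : phase n := row_mx (zpart c) (xpart c).

Lemma sympl_dot (u c : phase n) : sympl u c = dot u (swap c).
Proof. by rewrite /swap -{2}(hsubmxK u) dot_row_mx. Qed.

Lemma swapD (a b : phase n) : swap (a + b) = swap a + swap b.
Proof. by rewrite /swap /xpart /zpart !linearD /= add_row_mx. Qed.

Lemma symplDr (u a b : phase n) : sympl u (a + b) = sympl u a + sympl u b.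
Proof. by rewrite !sympl_dot swapD dotDr. Qed.

Lemma swap_eq0 (c : phase n) : (swap c == 0) = (c == 0).
Proof.
apply/eqP/eqP => [|->]; last by rewrite /swap /xpart /zpart !linear0 row_mx0.
rewrite /swap -row_mx0 => /eq_row_mx [zc0 xc0].
by rewrite -(hsubmxK c) -/(xpart c) -/(zpart c) zc0 xc0 row_mx0.
Qed.

Lemma sympl_char (C : numClosedFieldType) (c : phase n) :
  \sum_(u : phase n) sgn C (sympl u c) = (c == 0)%:R * 2%:R ^+ (n + n).
Proof. by under eq_bigr do rewrite sympl_dot; rewrite char_sum swap_eq0. Qed.
End Symplectic.

(* The Pauli operators T(0_x, w) are diagonal in the computational basis with
   entries (-1)^{w.y}; hence traces against them are characteristic functions
   of diagonals. *)
Section DiagonalPaulis.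
Variable C : numClosedFieldType.

Lemma bit2ord0 : bit2ord 0 = 0. Proof. by apply/val_inj; rewrite /= inordK. Qed.
Lemma bit2ord1 : bit2ord 1 = 1. Proof. by apply/val_inj; rewrite /= inordK. Qed.

Lemma pauli1_Z (b y y' : 'F_2) :
  pauli1 C 0 b (bit2ord y) (bit2ord y') = (y == y')%:R * sgn C (b * y).
Proof.
rewrite /pauli1 /= mul0n !expr0 mul1r scale1r.
case: (F2_cases b) => ->; case: (F2_cases y) => ->; case: (F2_cases y') => ->;
  rewrite ?bit2ord0 ?bit2ord1 /PZ ?expr0 ?expr1 !mxE ?mulr0 ?mulr1 ?sgn0 ?sgn1 //.
Qed.

Lemma T_zpoint n (w : bits n) :
  T C (zpoint w) = diag_mx (\row_i sgn C (dot w (enum_val i : bits n))).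
Proof.
apply/matrixP => i j; rewrite !mxE /xpart /zpart /zpoint row_mxKl row_mxKr.
under eq_bigr do rewrite [(0 : bits n) _ _]mxE pauli1_Z.
rewrite big_split /= -sgn_sum.
have [<-|ij] := eqVneq i j; first by rewrite big1 ?mul1r // => k _; rewrite eqxx.
rewrite mulr0n.
have [k ijk] : exists k, (enum_val i : bits n) 0 k != (enum_val j : bits n) 0 k.
  suff /existsP[k ijk] : [exists k, (enum_val i : bits n) 0 k != (enum_val j : bits n) 0 k].
    by exists k.
  apply: contraR ij => /existsPn eq_ij; apply/eqP/enum_val_inj/rowP => k.
  by apply/eqP; rewrite -[_ == _]negbK eq_ij.
by rewrite (bigD1 k) //= (negbTE ijk) !mul0r.
Qed.

Lemma T0 n : T C (0 : phase n) = 1%:M.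
Proof.
rewrite -[0 : phase n]row_mx0 -/(zpoint 0) T_zpoint.
by apply/matrixP => i j; rewrite !mxE dot0l sgn0.
Qed.

Lemma trace_zpauli n (M : op C n) (w : bits n) :
  \tr (M *m T C (zpoint w)) =
  \sum_(y : bits n) M (enum_rank y) (enum_rank y) * sgn C (dot w y).
Proof.
rewrite T_zpoint mul_mx_diag /mxtrace (reindex (@enum_rank _)) /=; last first.
  by exists enum_val => x _; [rewrite enum_rankK|rewrite enum_valK].
by apply: eq_bigr => y _; rewrite !mxE enum_rankK.
Qed.
End DiagonalPaulis.

Lemma wigner_fourier (C : numClosedFieldType) n F (rho : op C n) (b : phase n) :
  \sum_(u : phase n) Wig F rho u * sgn C (sympl u b)
  = sgn C (F b) * \tr (rho *m T C b).
Proof.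
set k := ((2 : C) ^+ n)^-1; set chi := fun a => sgn C (F a) * \tr (rho *m T C a).
have tr_A u : \tr (rho *m Aop C F u) = k * \sum_a sgn C (sympl u a) * chi a.
  rewrite /Aop -scalemxAr mxtraceZ mulmx_sumr raddf_sum; congr (_ * _).
  by apply: eq_bigr => a _ /=; rewrite -scalemxAr mxtraceZ sgnD mulrA.
transitivity (\sum_u k * k * \sum_a chi a * sgn C (sympl u (a + b))).
  apply: eq_bigr => u _; rewrite /Wig tr_A -!mulrA; congr (_ * (_ * _)).
  by rewrite mulr_suml; apply: eq_bigr => a _; rewrite symplDr sgnD; ring.
rewrite -mulr_sumr exchange_big /=.
under eq_bigr do rewrite -mulr_sumr sympl_char F2_mx_add_eq0.
rewrite (bigD1 b) //= big1 => [|a /negbTE ->]; last by rewrite mul0r mulr0.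
rewrite eqxx mul1r addr0 exprD /k /chi; field; exact: two_expn_neq0.
Qed.

Lemma linear_map0 n (S : phase n -> phase n) : linear S -> S 0 = 0.
Proof.
move=> linS; have := linS 1 0 0; rewrite !scale1r !addr0 => S00.
by apply: (addrI (S 0)); rewrite addr0 -S00.
Qed.

Section CliffordCovariance.
Variables (C : numClosedFieldType) (n : nat) (U : op C n).
Variables (S Sinv : phase n -> phase n) (P : phase n -> 'F_2).
Hypotheses (unitU : unitary U) (SinvK : cancel Sinv S).
Hypothesis S_sympl : forall a b, sympl (S a) (S b) = sympl a b.
Hypothesis U_T : forall a, U *m T C a *m adj U = sgn C (P a) *: T C (S a).

Lemma clifford_pullback a : adj U *m T C (S a) *m U = sgn C (P a) *: T C a.
Proof.
have adjUU : adj U *m U = 1%:M := mulmx1C unitU.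
have : adj U *m (U *m T C a *m adj U) *m U = T C a.
  by rewrite !mulmxA adjUU mul1mx -!mulmxA adjUU mulmx1.
rewrite U_T -scalemxAr -scalemxAl => <-.
by rewrite scalerA sgn_sq scale1r.
Qed.

Lemma trace_conj (rho : op C n) b :
  \tr (U *m rho *m adj U *m T C b) =
  sgn C (P (Sinv b)) * \tr (rho *m T C (Sinv b)).
Proof.
rewrite -{1}(SinvK b) -!mulmxA mxtrace_mulC -!mulmxA [adj U *m _]mulmxA.
by rewrite clifford_pullback -scalemxAr mxtraceZ.
Qed.

Lemma outcome_char (rho : op C n) F (w : bits n) :
  \sum_(y : bits n) outp U rho y * sgn C (dot w y) =
  sgn C (F (Sinv (zpoint w)) + P (Sinv (zpoint w))) *
  \sum_(u : phase n) Wig F rho u * sgn C (dot (xpart (S u)) w).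
Proof.
rewrite -trace_zpauli trace_conj; set a := Sinv (zpoint w).
have -> : \tr (rho *m T C a) = sgn C (F a) * \sum_u Wig F rho u * sgn C (sympl u a).
  by rewrite wigner_fourier mulrA sgn_sq mul1r.
rewrite mulrA -sgnD addrC; congr (_ * _); apply: eq_bigr => u _.
by rewrite -S_sympl SinvK /sympl /zpoint /xpart /zpart row_mxKl row_mxKr dot0r addr0.
Qed.

(* The identity is mapped to itself, so its phase is trivial. *)
Lemma clifford_phase0 : S 0 = 0 -> P 0 = 0.
Proof.
move=> S0; have := U_T 0; rewrite S0 !T0 mulmx1 unitU.
move=> /matrixP /(_ (enum_rank (0 : bits n)) (enum_rank (0 : bits n))).
rewrite !mxE eqxx mulr1 => /esym P0.
case: (F2_cases (P 0)) => // P01; move: P0; rewrite P01 => /eqP.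
by rewrite (negbTE (sgn1_neq1 C)).
Qed.
End CliffordCovariance.

Section Marginals.
Variables (C : numClosedFieldType) (n m : nat) (vs : m.-tuple (bits n)).

Definition span_vec (t : bits m) : bits n := \sum_j t 0 j *: tnth vs j.

Lemma parity_indicator (c : bits m) (x : bits n) :
  ([forall j, dot (tnth vs j) x == c 0 j])%:R =
  ((2 : C) ^+ m)^-1 * \sum_(t : bits m) sgn C (dot t c) * sgn C (dot (span_vec t) x).
Proof.
set z : bits m := \row_j (dot (tnth vs j) x + c 0 j).
have -> : [forall j, dot (tnth vs j) x == c 0 j] = (z == 0).
  apply/forallP/eqP => [eq_vc|/rowP z0 j].
    by apply/rowP => j; rewrite !mxE; apply/eqP; rewrite F2_add_eq0 eq_vc.
  by move: (z0 j); rewrite !mxE => /eqP; rewrite F2_add_eq0.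
have dot_z t : dot t z = dot (span_vec t) x + dot t c.
  rewrite /span_vec dot_suml [dot t c]/dot [dot t z]/dot -big_split.
  by apply: eq_bigr => j _; rewrite mxE dotZl mulrDr.
under eq_bigr do rewrite -sgnD addrC -dot_z.
by rewrite char_sum mulrCA mulVf ?mulr1 ?two_expn_neq0.
Qed.

Lemma marginal_from_chars (T : finType) (f : bits n -> C) (g : T -> C)
    (X : T -> bits n) (h : bits n -> 'F_2) (k : bits n) (c : bits m) :
  (forall w, \sum_(y : bits n) f y * sgn C (dot w y) =
             sgn C (h w) * \sum_u g u * sgn C (dot (X u) w)) ->
  (forall t, h (span_vec t) = dot k (span_vec t)) ->
  \sum_(y : bits n | [forall j, dot (tnth vs j) y == c 0 j]) f y
  = \sum_(u | [forall j, dot (tnth vs j) (X u + k) == c 0 j]) g u.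
Proof.
move=> f_char hk; set K := ((2 : C) ^+ m)^-1.
(* both sides are sums weighted by the indicator, expanded into characters *)
have mass (J : finType) (e : J -> C) (Y : J -> bits n) :
    \sum_(i | [forall j, dot (tnth vs j) (Y i) == c 0 j]) e i =
    K * \sum_t sgn C (dot t c) * \sum_i e i * sgn C (dot (span_vec t) (Y i)).
  rewrite big_mkcond /= (eq_bigr (fun i => e i * K *
    \sum_t sgn C (dot t c) * sgn C (dot (span_vec t) (Y i)))); last first.
    by move=> i _; rewrite -mulrA -parity_indicator; case: ifP; rewrite ?mulr1 ?mulr0.
  rewrite mulr_sumr; under [RHS]eq_bigr do rewrite mulr_sumr mulr_sumr.
  rewrite exchange_big; apply: eq_bigr => i _; rewrite !mulr_sumr.
  by apply: eq_bigr => t _; ring.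
rewrite (mass _ f id) (mass _ g (fun u => X u + k)); congr (_ * _).
apply: eq_bigr => t _; rewrite f_char hk; congr (_ * _).
rewrite mulr_sumr; apply: eq_bigr => u _.
by rewrite (dotC (span_vec t)) dotDl sgnD (dotC (X u)) (dotC k); ring.
Qed.
End Marginals.

(* The quadratic part x |-> sum_{i,j} Q_ij x_i x_j of a Boolean polynomial and
   its polar form B(x,y) = quad(x,y) + quad(y,x), an alternating bilinear form
   written as a dot product so that it is linear in y by construction. *)
Section PolarForm.
Variables (n : nat) (Q : 'I_n -> 'I_n -> 'F_2).

Definition quad (x y : bits n) : 'F_2 := \sum_i \sum_j Q i j * x 0 i * y 0 j.
Definition polar_vec (x : bits n) : bits n := \row_j \sum_i (Q i j + Q j i) * x 0 i.
Definition polar (x y : bits n) : 'F_2 := dot (polar_vec x) y.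

Lemma polarE x y : polar x y = quad x y + quad y x.
Proof.
rewrite /polar /dot [quad x y]exchange_big -big_split; apply: eq_bigr => j _.
rewrite mxE mulr_suml -big_split; apply: eq_bigr => i _ /=; ring.
Qed.

Lemma polarC x y : polar x y = polar y x.
Proof. by rewrite !polarE addrC. Qed.

Lemma polar_xx x : polar x x = 0.
Proof. by rewrite polarE F2_addxx. Qed.

Lemma polarDr x y z : polar x (y + z) = polar x y + polar x z.
Proof. exact: dotDr. Qed.

Lemma polarZr x a y : polar x (a *: y) = a * polar x y.
Proof. by rewrite /polar dotC dotZl dotC. Qed.

Lemma polarDl x y z : polar (y + z) x = polar y x + polar z x.
Proof. by rewrite !(polarC _ x) polarDr. Qed.

Lemma polarZl x a y : polar (a *: y) x = a * polar y x.
Proof. by rewrite !(polarC _ x) polarZr. Qed.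

Lemma quadDl x y z : quad (x + y) z = quad x z + quad y z.
Proof.
rewrite /quad -big_split; apply: eq_bigr => i _; rewrite -big_split.
by apply: eq_bigr => j _; rewrite mxE /=; ring.
Qed.

Lemma quadDr x y z : quad z (x + y) = quad z x + quad z y.
Proof.
rewrite /quad -big_split; apply: eq_bigr => i _; rewrite -big_split.
by apply: eq_bigr => j _; rewrite mxE /=; ring.
Qed.

Definition isotropic (W : {vspace bits n}) : Prop :=
  forall x y, x \in W -> y \in W -> polar x y = 0.

(* A totally isotropic W inside Z with 2 dim W < dim Z extends by one
   dimension: the polar-orthogonal of W in Z has dimension at least
   dim Z - dim W > dim W, so it contains some x outside W, and W + <x> is
   still isotropic because the form is alternating. *)
Lemma isotropic_extend (Z W : {vspace bits n}) :
  (W <= Z)%VS -> isotropic W -> (2 * \dim W < \dim Z)%N ->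
  exists W', [/\ (W' <= Z)%VS, isotropic W' & \dim W' = (\dim W).+1].
Proof.
move=> WZ isoW dimWZ; set r := \dim W; set bs := vbasis W.
pose M : 'M['F_2]_(n, r) := \matrix_(i, j) polar_vec bs`_j 0 i.
have M_polar x j : (x *m M) 0 j = polar bs`_j x.
  by rewrite mxE /polar dotC; apply: eq_bigr => i _; rewrite mxE.
pose f : 'Hom(bits n, 'rV['F_2]_r) := linfun (mulmxr M).
have dim_img : (\dim (f @: Z) <= r)%N.
  by have := dimvS (subvf (f @: Z)); rewrite dimvf dim_matrix mul1r.
have /subvPn[x] : ~~ ((Z :&: lker f) <= W)%VS.
  apply: contraTN dimWZ => /dimvS dimKW; rewrite -leqNgt -(limg_ker_dim f Z).
  by rewrite mul2n -addnn leq_add.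
rewrite memv_cap memv_ker lfunE /= => /andP[xZ /eqP xM0] xW.
have polar_Wx w : w \in W -> polar w x = 0.
  move=> /coord_vbasis ->; rewrite polarC /polar dotC dot_suml big1 // => j _.
  by rewrite dotC -/(polar x _) polarZr polarC -M_polar xM0 mxE mulr0.
have x0 : x != 0 by apply: contraNneq xW => ->; exact: mem0v.
have Wx0 : (W :&: <[x]> = 0)%VS.
  apply/eqP; rewrite -subv0; apply/subvP => y; rewrite memv_cap memv0.
  case/andP=> yW /vlineP[a yx]; move: yW; rewrite yx.
  by case: (F2_cases a) => ->; rewrite ?scale0r ?eqxx // scale1r (negbTE xW).
exists (W + <[x]>)%VS; split.
- by rewrite subv_add WZ -memvE.
- move=> y1 y2 /memv_addP[w1 w1W [v1 /vlineP[a1 ->] ->]].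
  move=> /memv_addP[w2 w2W [v2 /vlineP[a2 ->] ->]].
  rewrite !polarDl !polarDr !polarZl !polarZr polar_xx isoW // !polar_Wx //.
  by rewrite (polarC x w2) polar_Wx // !mulr0 !addr0.
- by rewrite dimv_disjoint_sum // dim_vline x0 addn1.
Qed.

Lemma isotropic_subspace (Z : {vspace bits n}) k : (2 * k <= (\dim Z).+1)%N ->
  exists W, [/\ (W <= Z)%VS, isotropic W & \dim W = k].
Proof.
elim: k => [_|k IH dimk].
  exists 0%VS; split; rewrite ?sub0v ?dimv0 // => x y.
  by rewrite memv0 => /eqP-> _; rewrite polarC /polar dot0r.
have [|W [WZ isoW dimW]] := IH; first by lia.
have [|W' [W'Z isoW' dimW']] := isotropic_extend WZ isoW; first by rewrite dimW; lia.
by exists W'; rewrite dimW' dimW.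
Qed.
End PolarForm.

(* Over Z_2 an additive function on a subspace V is a linear form there, hence
   the restriction of some character y |-> k.y. *)
Section AdditiveForms.
Variables (n : nat) (V : {vspace bits n}) (q : bits n -> 'F_2).
Hypothesis qD : {in V &, forall x y, q (x + y) = q x + q y}.

Lemma additive_sum (J : finType) (cs : J -> 'F_2) (bs : J -> bits n) :
  (forall j, bs j \in V) -> q (\sum_j cs j *: bs j) = \sum_j cs j * q (bs j).
Proof.
move=> bsV; have q0 : q 0 = 0 by apply: (addrI (q 0)); rewrite -qD ?mem0v ?addr0.
have qZ a x : q (a *: x) = a * q x.
  by case: (F2_cases a) => ->; rewrite ?scale0r ?scale1r ?mul0r ?mul1r.
suff [] : \sum_j cs j *: bs j \in V /\ q (\sum_j cs j *: bs j) = \sum_j cs j * q (bs j).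
  by [].
elim/big_rec2: _ => [|j s1 s2 _ [s1V <-]]; first by rewrite mem0v q0.
by rewrite memvD ?memvZ // qD ?memvZ // qZ.
Qed.

Lemma additive_dot : exists k : bits n, {in V, forall v, q v = dot k v}.
Proof.
exists (\row_i q (projv V (delta_mx 0 i))) => v vV.
have -> : q v = q (\sum_i v 0 i *: projv V (delta_mx 0 i)).
  by rewrite -{1}(projv_id vV) {1}[v]row_sum_delta linear_sum; under eq_bigr do rewrite linearZ.
rewrite additive_sum => [|i]; last exact: memv_proj.
by rewrite dotC; apply: eq_bigr => i _; rewrite mxE.
Qed.
End AdditiveForms.

Lemma quadratic_additive n (Q : 'I_n -> 'I_n -> 'F_2) (Z W : {vspace bits n})
    (q : bits n -> 'F_2) (c0 : 'F_2) (l : 'I_n -> 'F_2) :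
  q 0 = 0 -> {in Z, forall x, q x = c0 + \sum_i l i * x 0 i + quad Q x x} ->
  (W <= Z)%VS -> isotropic Q W -> {in W &, forall x y, q (x + y) = q x + q y}.
Proof.
move=> q0 qE WZ isoW x y xW yW; have [xZ yZ] := (subvP WZ x xW, subvP WZ y yW).
have c00 : c0 = 0.
  move: (qE 0 (mem0v Z)); rewrite q0 /quad big1 => [|i _]; last by rewrite mxE mulr0.
  by rewrite big1 ?addr0 // => i _; rewrite big1 // => j _; rewrite !mxE mulr0.
have lin_D : \sum_i l i * (x + y) 0 i = \sum_i l i * x 0 i + \sum_i l i * y 0 i.
  by rewrite -big_split; apply: eq_bigr => i _; rewrite mxE mulrDr.
rewrite !qE ?memvD // c00 lin_D quadDl !quadDr.
have -> : quad Q x x + quad Q x y + (quad Q y x + quad Q y y) =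
          quad Q x x + quad Q y y + polar Q x y by rewrite polarE; ring.
by rewrite isoW // addr0; ring.
Qed.

Section CoordinateSubspace.
Variables (n : nat) (I : {set 'I_n}).

Definition ZI_basis : #|I|.-tuple (bits n) :=
  [tuple delta_mx 0 (enum_val i) | i < #|I|].
Definition ZI : {vspace bits n} := <<ZI_basis>>%VS.

Lemma ZI_basisE (i : 'I_#|I|) : ZI_basis`_i = delta_mx 0 (enum_val i).
Proof. by rewrite -tnth_nth tnth_mktuple. Qed.

Lemma ZI_in v : v \in ZI -> in_ZI I v.
Proof.
move/coord_span => -> j jI; rewrite summxE big1 // => i _.
rewrite ZI_basisE mxE [delta_mx _ _ _ _]mxE eqxx /=.
case: eqP => [ij|]; last by rewrite mulr0.
by move: jI; rewrite ij enum_valP.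
Qed.

Lemma dim_ZI : \dim ZI = #|I|.
Proof.
suff /eqP : free ZI_basis by rewrite size_tuple.
apply/freeP => k sum0 i.
have := congr1 (fun M : bits n => M 0 (enum_val i)) sum0; rewrite /= summxE mxE.
rewrite (bigD1 i) //= big1 => [|j ji]; rewrite ZI_basisE !mxE ?eqxx ?mulr1 ?addr0 //.
by rewrite (inj_eq enum_val_inj) eq_sym (negbTE ji) mulr0.
Qed.
End CoordinateSubspace.

Unset Implicit Arguments.

Theorem theorem1 (C : numClosedFieldType) (n : nat)
  (rho : op C n) (F : phase n -> 'F_2)
  (U : op C n) (S Sinv : phase n -> phase n) (P : phase n -> 'F_2)
  (I : {set 'I_n}) :
  density rho ->
  F 0 = 0 ->
  (forall u, 0 <= Wig F rho u) ->
  unitary U ->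
  linear S -> cancel S Sinv -> cancel Sinv S ->
  (forall a b, sympl (S a) (S b) = sympl a b) ->
  (forall a, U *m T C a *m adj U = sgn C (P a) *: T C (S a)) ->
  let F' := fun a => F (Sinv a) + P (Sinv a) in
  let q := fun az => F' (zpoint az) in
  (exists (c0 : 'F_2) (l : 'I_n -> 'F_2) (Q : 'I_n -> 'I_n -> 'F_2),
      forall az, in_ZI I az ->
        q az = c0 + \sum_(i < n) l i * az 0 i
                  + \sum_(i < n) \sum_(j < n) Q i j * az 0 i * az 0 j) ->
  exists (V : {vspace bits n}) (k : bits n),
    [/\ forall v, v \in V -> in_ZI I v,
        ((#|I|.+1)./2 <= \dim V)%N,
        forall az, az \in V -> q az = dot k az
      & forall (m : nat) (vs : m.-tuple (bits n)) (c : bits m),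
          basis_of V vs ->
          \sum_(y : bits n | [forall j : 'I_m, dot (tnth vs j) y == c 0 j])
              outp U rho y
          = \sum_(u : phase n |
                    [forall j : 'I_m, dot (tnth vs j) (xpart (S u) + k) == c 0 j])
              Wig F rho u].
Proof.
move=> _ F0 _ unitU linS SK SinvK S_sympl U_T F' q [c0 [l [Q qE]]].
have S0 : S 0 = 0 := linear_map0 linS.
have Sinv0 : Sinv 0 = 0 by rewrite -{1}S0 SK.
have q0 : q 0 = 0.
  by rewrite /q /F' /zpoint row_mx0 Sinv0 F0 (clifford_phase0 unitU U_T S0) addr0.
have [|V [VZ isoV dimV]] := isotropic_subspace Q (k := (#|I|.+1)./2) (Z := ZI I).
  by rewrite dim_ZI mul2n halfK leq_subr.
have [k qk] := additive_dot (quadratic_additive q0 (fun x xZ => qE x (ZI_in xZ)) VZ isoV).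
exists V, k; split.
- by move=> v /(subvP VZ) /ZI_in.
- by rewrite dimV.
- exact: qk.
move=> m vs c basis_vs.
apply: marginal_from_chars => [w|t]; first exact: (outcome_char unitU SinvK S_sympl U_T).
apply: qk; apply: memv_suml => j _; apply/memvZ/(basis_mem basis_vs)/mem_tnth.
Qed.
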